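(* Let $P$ be a finite propositional normal logic program and let $\Delta_w$ be any function assigning to each pair $(F,Q)$, where $F\subseteq \mathit{At}(P)$ and $Q$ is a Horn program with $\mathit{At}(Q)\subseteq\overline{F}$, a set $\Delta_w(F,Q)$ such that (W1) $\Delta_w(F,Q)\subseteq \overline{F}\setminus LM(Q)$, and (W2) $\Delta_w(F,Q)=\emptyset$ if and only if $\overline{F}\setminus LM(Q)=\emptyset$. Define $B_w(F)=F\cup \Delta_w(F,P_{F,T}^h)$ where $T=GL(\overline{F})$. Then for every $F$, $F\subseteq B_w(F)\subseteq B(F)$; the sequence $B_w^i(\emptyset)$, $i=0,1,2,\dots$, is contained in $F_{wfs}$ and is nondecreasing, hence there is a first $i$ with $B_w^i(\emptyset)=B_w^{i+1}(\emptyset)$; and for this $i$, $B_w^i(\emptyset)=F_{wfs}$.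
   Context: $\mathit{At}(P)$ is the set of atoms occurring in $P$ (and $\mathit{At}(Q)$ those in $Q$); for $X\subseteq \mathit{At}(P)$, $\overline{X}=\mathit{At}(P)\setminus X$. $LM(Q)$ is the least model of a Horn program $Q$. For $M\subseteq\mathit{At}(P)$, $P_M$ is obtained from $P$ by removing all rules whose bodies contain $\mathbf{not}(a)$ with $a\in M$; $P^h$ is obtained by deleting all negative literals from rule bodies; $GL(M)=LM((P_M)^h)$. $T_{wfs}=\mathrm{lfp}(GL\circ GL)$, $F_{wfs}=\overline{GL(T_{wfs})}$. For $F,T\subseteq\mathit{At}(P)$, $P_{F,T}$ is obtained from $P$ by removing all rules with head in $F$, all rules whose body contains a positive occurrence of an atom of $F$, and all rules whose body contains $\mathbf{not}(a)$ with $a\in T$; $P_{F,T}^h=(P_{F,T})^h$ (note $\mathit{At}(P_{F,T}^h)\subseteq\overline F$). $B(F)=\overline{LM(P_{F,T}^h)}$ with $T=GL(\overline F)$. $B_w^i$ denotes the $i$-fold iterate of $B_w$. *)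

From mathcomp Require Import all_boot.
Set Implicit Arguments. Unset Strict Implicit. Unset Printing Implicit Defensive.

Section LP.
Variable T : finType.

Record rule := Rule { head : T; pos : seq T; neg : seq T }.
Definition program := seq rule.

Definition At (P : program) : {set T} :=
  [set a | has (fun r => (a == head r) || (a \in pos r) || (a \in neg r)) P].

Definition horn (Q : program) : bool := all (fun r => neg r == [::]) Q.

Definition model (Q : program) (M : {set T}) : bool :=
  all (fun r => all (fun a => a \in M) (pos r) ==> (head r \in M)) Q.

Definition LM (Q : program) : {set T} := \bigcap_(M | model Q M) M.

Definition hpart (P : program) : program :=
  map (fun r => Rule (head r) (pos r) [::]) P.

Definition reductM (P : program) (M : {set T}) : program :=
  filter (fun r => ~~ has (fun a => a \in M) (neg r)) P.

Definition GL (P : program) (M : {set T}) : {set T} := LM (hpart (reductM P M)).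

Definition lfp (f : {set T} -> {set T}) : {set T} := \bigcap_(X | f X \subset X) X.

Definition Twfs (P : program) : {set T} := lfp (fun X => GL P (GL P X)).
Definition Fwfs (P : program) : {set T} := At P :\: GL P (Twfs P).

Definition PFT (P : program) (F Tt : {set T}) : program :=
  filter (fun r => [&& head r \notin F,
                       ~~ has (fun a => a \in F) (pos r) &
                       ~~ has (fun a => a \in Tt) (neg r)]) P.

Definition B (P : program) (F : {set T}) : {set T} :=
  At P :\: LM (hpart (PFT P F (GL P (At P :\: F)))).

Definition Bw (P : program) (Dw : {set T} -> program -> {set T}) (F : {set T}) : {set T} :=
  F :|: Dw F (hpart (PFT P F (GL P (At P :\: F)))).

End LP.

(** Every step of [B_w] adds, by (W1), only atoms outside the least model of
    [P_{F,T}^h], which [B] declares false; as long as [F] consists of atoms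
    false in the well-founded model, such atoms are again well-founded false,
    because [GL(T_wfs)] is a model of [P_{F,T}^h] whose atoms avoid [F]. So the
    chain [B_w^i(∅)] stays inside [F_wfs] and, being nondecreasing in a finite
    lattice, becomes stationary. At a fixpoint [F] the increment is empty, so
    (W2) gives [At(P) \ F ⊆ LM(P_{F,T}^h) ⊆ GL(GL(At(P) \ F))]: the complement
    of [F] is a postfixpoint of [GL ∘ GL], hence lies in [GL(T_wfs)], which
    means [F_wfs ⊆ F]. *)

From HB Require Import structures.
From mathcomp Require Import all_boot.

Set Implicit Arguments. Unset Strict Implicit. Unset Printing Implicit Defensive.

Definition tuple_of_rule (T : finType) (r : rule T) := (head r, pos r, neg r).
Definition rule_of_tuple (T : finType) (x : T * seq T * seq T) :=
  Rule x.1.1 x.1.2 x.2.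
Lemma tuple_of_ruleK (T : finType) : cancel (@tuple_of_rule T) (@rule_of_tuple T).
Proof. by case. Qed.
HB.instance Definition _ (T : finType) :=
  Equality.copy (rule T) (can_type (@tuple_of_ruleK T)).

Lemma chain_stabilizes (T : finType) (s : nat -> {set T}) :
  (forall i, s i \subset s i.+1) -> exists i, s i == s i.+1.
Proof.
move=> s_incr.
have card_ge n : (forall j, j < n -> s j != s j.+1) -> n <= #|s n|.
  elim: n => [//|n IHn] s_neq.
  have /proper_card : s n \proper s n.+1 by rewrite properEneq s_neq ?s_incr.
  by apply: leq_ltn_trans; apply: IHn => j /ltnW; apply: s_neq.
have [/existsP [j s_eq] | /existsPn s_neq] :=
  boolP [exists j : 'I_#|T|.+1, s j == s j.+1]; first by exists j.
have := card_ge #|T|.+1 (fun j lt_j => s_neq (Ordinal lt_j)).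
by rewrite ltnNge max_card.
Qed.

Section LogicPrograms.
Variable T : finType.
Implicit Types (P Q : program T) (F G X Y : {set T}).

Lemma lfp_least (f : {set T} -> {set T}) X : f X \subset X -> lfp f \subset X.
Proof. exact: bigcap_inf. Qed.

Lemma lfp_prefix (f : {set T} -> {set T}) :
  {homo f : X Y / X \subset Y} -> f (lfp f) \subset lfp f.
Proof.
move=> f_mono; apply/bigcapsP => X fX_sub.
by apply: (subset_trans _ fX_sub); apply/f_mono/lfp_least.
Qed.

Lemma modelP Q X :
  reflect (forall r, r \in Q -> {subset pos r <= X} -> head r \in X) (model Q X).
Proof.
apply: (iffP allP) => X_model r rQ.
  by move=> pos_X; move/implyP: (X_model r rQ); apply; apply/allP.
by apply/implyP => /allP; apply: X_model.
Qed.

Lemma LM_min Q X : model Q X -> LM Q \subset X.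
Proof. exact: bigcap_inf. Qed.

Lemma LM_model Q : model Q (LM Q).
Proof.
apply/modelP => r rQ pos_LM; apply/bigcapP => X X_model.
by apply: (modelP _ _ X_model r rQ) => a /pos_LM /bigcapP; apply.
Qed.

Lemma LM_subprog Q1 Q2 : {subset Q1 <= Q2} -> LM Q1 \subset LM Q2.
Proof.
move=> sub12; apply/LM_min/modelP => r /sub12.
exact: (modelP _ _ (LM_model Q2)).
Qed.

Lemma LM_sub_At Q : LM Q \subset At Q.
Proof.
apply/LM_min/modelP => r rQ _; rewrite inE; apply/hasP; exists r => //.
by rewrite eqxx.
Qed.

Lemma horn_hpart Q : horn (hpart Q).
Proof. by rewrite /horn all_map; apply/allP. Qed.

Lemma reductM_anti P X Y : X \subset Y -> {subset reductM P Y <= reductM P X}.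
Proof.
move=> sXY r; rewrite !mem_filter => /andP [no_negY ->]; rewrite andbT.
apply: contra no_negY => /hasP [a a_neg aX]; apply/hasP.
by exists a; last exact: (subsetP sXY).
Qed.

Lemma GL_anti P X Y : X \subset Y -> GL P Y \subset GL P X.
Proof. by move=> sXY; apply/LM_subprog/sub_map/reductM_anti. Qed.

Lemma GL_sub_At P X : GL P X \subset At P.
Proof.
apply/LM_min/modelP => _ /mapP [r rPX ->] _ /=.
rewrite inE; apply/hasP; exists r; last by rewrite eqxx.
by move: rPX; rewrite mem_filter => /andP [].
Qed.

Lemma Twfs_prefix P : GL P (GL P (Twfs P)) \subset Twfs P.
Proof. by apply: lfp_prefix => X Y /GL_anti/GL_anti. Qed.

Lemma postfix_sub_GL_Twfs P G : G \subset GL P (GL P G) -> G \subset GL P (Twfs P).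
Proof.
move=> G_post; have Twfs_sub : Twfs P \subset GL P G by apply/lfp_least/GL_anti.
exact: subset_trans G_post (GL_anti _ Twfs_sub).
Qed.

Definition PFTh P F := hpart (PFT P F (GL P (At P :\: F))).

Lemma At_PFT P F Y : At (hpart (PFT P F Y)) \subset At P :\: F.
Proof.
apply/subsetP => a; rewrite inE => /hasP [_ /mapP [r rPFT ->]] /=.
move: rPFT; rewrite mem_filter => /andP [/and3P [hF no_posF _] rP].
rewrite in_nil orbF in_setD => a_in_r; apply/andP; split.
  case/orP: a_in_r => [/eqP -> // | a_pos].
  by apply: contra no_posF => aF; apply/hasP; exists a.
by rewrite inE; apply/hasP; exists r; rewrite ?a_in_r.
Qed.

Lemma LM_PFTh_sub P F : LM (PFTh P F) \subset At P :\: F.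
Proof. exact: subset_trans (LM_sub_At _) (At_PFT _ _ _). Qed.

(* [GL P X :&: LM _] is a model of [(P_X)^h]: a rule of [P_X] firing inside
   [GL P X] has its head and positive body outside [F], so it survives in
   [P_{F,Y}]. *)
Lemma GL_sub_LM_PFT P F X Y :
  [disjoint GL P X & F] -> Y \subset X -> GL P X \subset LM (hpart (PFT P F Y)).
Proof.
move=> GL_F_dis sYX; set U := GL P X.
have notinF a : a \in U -> a \notin F by move=> aU; rewrite (disjointFr GL_F_dis).
suff : U \subset U :&: LM (hpart (PFT P F Y)).
  by move/subset_trans; apply; apply: subsetIr.
apply/LM_min/modelP => _ /mapP [r rPX ->] /= pos_sub.
have pos_U : {subset pos r <= U} by move=> a /pos_sub /setIP [].
have pos_LM : {subset pos r <= LM (hpart (PFT P F Y))} by move=> a /pos_sub /setIP [].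
have hU : head r \in U.
  by apply: (modelP _ _ (LM_model _) (Rule (head r) (pos r) [::])) => //; apply: map_f.
rewrite inE hU; apply: (modelP _ _ (LM_model _) (Rule (head r) (pos r) [::])) => //.
apply: map_f; move/(reductM_anti sYX): rPX.
rewrite !mem_filter => /andP [no_negY ->]; rewrite notinF //= no_negY !andbT.
by apply/hasPn => a /pos_U; apply: notinF.
Qed.

Lemma B_sub_Fwfs P F : F \subset Fwfs P -> B P F \subset Fwfs P.
Proof.
move=> sF_Fwfs; have GL_F_dis : [disjoint GL P (Twfs P) & F].
  by rewrite disjoint_sym disjoints_subset (subset_trans sF_Fwfs) ?subsetDr.
apply/setDS/GL_sub_LM_PFT => //; apply: subset_trans (Twfs_prefix P).
by apply/GL_anti; rewrite subsetD GL_sub_At.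
Qed.

Lemma Fwfs_sub_of_compl_sub_LM P F :
  At P :\: F \subset LM (PFTh P F) -> Fwfs P \subset F.
Proof.
set G := At P :\: F => sG_LM.
have /postfix_sub_GL_Twfs sG_GL : G \subset GL P (GL P G).
  apply: subset_trans sG_LM (LM_subprog _); apply: sub_map => r.
  by rewrite !mem_filter => /andP [/and3P [_ _ ->] ->].
apply/subsetP => a; rewrite in_setD => /andP [a_GL aP].
by apply: contraNT a_GL => aF; apply: (subsetP sG_GL); rewrite in_setD aF.
Qed.

End LogicPrograms.

Section WeakBelief.
Variables (T : finType) (P : program T) (Dw : {set T} -> program T -> {set T}).
Implicit Types (F : {set T}) (Q : program T).
Hypothesis Dw_sub : forall F Q, F \subset At P -> horn Q -> At Q \subset At P :\: F ->
  Dw F Q \subset (At P :\: F) :\: LM Q.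
Hypothesis Dw_eq0 : forall F Q, F \subset At P -> horn Q -> At Q \subset At P :\: F ->
  (Dw F Q = set0 <-> (At P :\: F) :\: LM Q = set0).

Lemma Dw_PFTh_sub F :
  F \subset At P -> Dw F (PFTh P F) \subset (At P :\: F) :\: LM (PFTh P F).
Proof. by move=> sFP; apply: Dw_sub; rewrite ?horn_hpart ?At_PFT. Qed.

Lemma Bw_sub_B F : F \subset At P -> Bw P Dw F \subset B P F.
Proof.
move=> sFP; rewrite /Bw subUset -/(PFTh P F); apply/andP; split.
  rewrite subsetD sFP disjoint_sym disjoints_subset.
  by apply: subset_trans (LM_PFTh_sub P F) _; apply: subsetDr.
by apply: subset_trans (Dw_PFTh_sub sFP) _; apply/setSD/subsetDl.
Qed.

Lemma iter_Bw_sub_Fwfs i : iter i (Bw P Dw) set0 \subset Fwfs P.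
Proof.
elim: i => [|i IHi] /=; first exact: sub0set.
apply: subset_trans (B_sub_Fwfs IHi); apply: Bw_sub_B.
exact: subset_trans IHi (subsetDl _ _).
Qed.

Lemma Fwfs_sub_Bw_fixpoint F : F \subset At P -> Bw P Dw F = F -> Fwfs P \subset F.
Proof.
move=> sFP BwF; apply: Fwfs_sub_of_compl_sub_LM; rewrite -setD_eq0; apply/eqP.
apply/(Dw_eq0 sFP (horn_hpart _) (At_PFT P F _))/eqP; rewrite -subset0.
have /subsetP sDw := Dw_PFTh_sub sFP.
apply/subsetP => a a_Dw; have := sDw a a_Dw; rewrite !in_setD => /andP [_ /andP [aF _]].
by move: aF; rewrite -{1}BwF /Bw in_setU a_Dw orbT.
Qed.

End WeakBelief.

Theorem mainTheorem3 (T : finType) (P : program T)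
  (Dw : {set T} -> program T -> {set T})
  (W1 : forall (F : {set T}) (Q : program T),
      F \subset At P -> horn Q -> At Q \subset At P :\: F ->
      Dw F Q \subset (At P :\: F) :\: LM Q)
  (W2 : forall (F : {set T}) (Q : program T),
      F \subset At P -> horn Q -> At Q \subset At P :\: F ->
      (Dw F Q = set0 <-> (At P :\: F) :\: LM Q = set0)) :
  (forall F : {set T}, F \subset At P ->
      F \subset Bw P Dw F /\ Bw P Dw F \subset B P F) /\
  (forall i : nat, iter i (Bw P Dw) set0 \subset Fwfs P) /\
  (forall i : nat, iter i (Bw P Dw) set0 \subset iter i.+1 (Bw P Dw) set0) /\
  (exists i : nat,
      iter i (Bw P Dw) set0 = iter i.+1 (Bw P Dw) set0 /\
      (forall j : nat, j < i -> iter j (Bw P Dw) set0 <> iter j.+1 (Bw P Dw) set0) /\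
      iter i (Bw P Dw) set0 = Fwfs P).
Proof.
set s := fun i => iter i (Bw P Dw) set0.
have s_incr i : s i \subset s i.+1 by apply: subsetUl.
have s_Fwfs i : s i \subset Fwfs P := iter_Bw_sub_Fwfs W1 i.
split; first by move=> F sFP; split; [apply: subsetUl | apply: (Bw_sub_B W1)].
do 2!split=> //; have [i /eqP s_eq s_min] := ex_minnP (chain_stabilizes s_incr).
exists i; split=> //.
split; first by move=> j lt_ji /eqP /s_min; rewrite leqNgt lt_ji.
have s_At : s i \subset At P := subset_trans (s_Fwfs i) (subsetDl _ _).
by apply/eqP; rewrite eqEsubset s_Fwfs (Fwfs_sub_Bw_fixpoint W1 W2 s_At (esym s_eq)).
Qed.
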